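(* There exists a RobMCF instance $(G,u,c,\boldsymbol b)$ with two scenarios and integral capacities (indeed $u\equiv 1$) such that no optimal solution of the continuous relaxation of the RobMCF problem is integral; i.e., the minimum cost over all real-valued robust $\boldsymbol b$-flows is strictly smaller than the minimum cost over all integral robust $\boldsymbol b$-flows.
   Context: A RobMCF instance $(G,u,c,\boldsymbol b)$ consists of a finite directed graph (parallel arcs allowed) $G=(V,A)$ whose arc set is partitioned as $A=A^{\mathrm{fix}}\cup A^{\mathrm{free}}$ into fixed and free arcs, capacities $u:A\to\mathbb Z_{\ge0}$, costs $c:A\to\mathbb Z_{\ge0}$, a finite nonempty set of scenarios $\Lambda$, and for each $\lambda\in\Lambda$ balances $b^\lambda:V\to\mathbb Z$ with $\sum_{v\in V}b^\lambda(v)=0$; $\boldsymbol b=(b^\lambda)_{\lambda\in\Lambda}$. A $b^\lambda$-flow is a function $f^\lambda:A\to\mathbb Z_{\ge0}$ with $f^\lambda(a)\le u(a)$ for all $a\in A$ and $\sum_{a=(v,w)\in A}f^\lambda(a)-\sum_{a=(w,v)\in A}f^\lambda(a)=b^\lambda(v)$ for all $v\in V$ (outflow minus inflow); its cost is $c(f^\lambda)=\sum_{a\in A}c(a)f^\lambda(a)$. A robust $\boldsymbol b$-flow is a tuple $\boldsymbol f=(f^\lambda)_{\lambda\in\Lambda}$ of $b^\lambda$-flows with $f^\lambda(a)=f^{\lambda'}(a)$ for all $a\in A^{\mathrm{fix}}$ and all $\lambda,\lambda'\in\Lambda$ (consistent flow constraints); its cost is $c(\boldsymbol f)=\max_{\lambda\in\Lambda}c(f^\lambda)$.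 The RobMCF problem asks for a robust $\boldsymbol b$-flow of minimum cost (an optimal robust $\boldsymbol b$-flow). The continuous relaxation is the same problem where the flows $f^\lambda$ may take values in $\mathbb R_{\ge 0}$ instead of $\mathbb Z_{\ge0}$. *)

From HB Require Import structures.
From mathcomp Require Import all_boot all_order all_algebra.
From mathcomp Require Import reals.
Set Implicit Arguments. Unset Strict Implicit. Unset Printing Implicit Defensive.
Import Order.TTheory GRing.Theory Num.Theory.
Local Open Scope ring_scope.

(* A RobMCF instance: directed multigraph (arcs A with tail/head, so parallel
   arcs are allowed), fixed arcs, capacities, costs, scenarios, balances. *)
Record instance := Instance {
  V : finType;
  A : finType;
  tail : A -> V;
  head : A -> V;
  fixed : pred A;            (* A^fix; A^free is its complement *)
  cap : A -> nat;
  cost : A -> nat;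
  Sc : finType;
  bal : Sc -> V -> int
}.

Definition valid (I : instance) : Prop :=
  (0 < #|Sc I|)%N /\ forall l : Sc I, \sum_(v : V I) bal l v = 0.

Section Flows.
Variables (R : realType) (I : instance).

Definition is_bflow (l : Sc I) (f : A I -> R) : Prop :=
  (forall a, 0 <= f a <= (cap a)%:R) /\
  forall v : V I,
    \sum_(a : A I | tail a == v) f a - \sum_(a : A I | head a == v) f a
      = (bal l v)%:~R.

Definition robust_flow (f : Sc I -> A I -> R) : Prop :=
  (forall l, is_bflow l (f l)) /\
  forall (a : A I) (l l' : Sc I), fixed a -> f l a = f l' a.

Definition integral_flow (f : Sc I -> A I -> R) : Prop :=
  forall l a, f l a \is a Num.int.

Definition flow_cost (g : A I -> R) : R := \sum_(a : A I) (cost a)%:R * g a.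

(* c(f) = max over scenarios (costs are nonnegative, so 0 is a neutral start). *)
Definition robust_cost (f : Sc I -> A I -> R) : R :=
  \big[Num.max/0]_(l : Sc I) flow_cost (f l).

End Flows.

From Pilot Require Import Defs.
From HB Require Import structures.
From mathcomp Require Import all_boot all_order all_algebra.
From mathcomp Require Import reals.
From mathcomp Require Import lra zify.

Set Implicit Arguments.
Unset Strict Implicit.
Unset Printing Implicit Defensive.
Import Order.TTheory GRing.Theory Num.Theory.
Local Open Scope ring_scope.

(* The instance has two vertices s, t and three arcs of capacity 1: a fixed
   arc s -> t of cost 0, a free arc s -> t of cost 1 and a free back arc
   t -> s of cost 1.  In the demand scenario one unit goes from s to t, in
   the zero scenario all balances vanish.  If x is the (common) flow on the
   fixed arc, the demand scenario must push 1 - x units over costly arcs and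
   the zero scenario must return x units over the back arc, so every robust
   flow costs at least max (1 - x, x).  Hence a real robust flow costs at
   least 1/2 (attained with x = 1/2), while an integral one has x in {0, 1}
   and costs at least 1 (attained by sending the demand over the costly
   direct arc). *)

Section RobustCost.
Variables (R : realType) (I : instance).

Lemma flow_cost_le_robust_cost (f : Sc I -> A I -> R) (l : Sc I) :
  flow_cost (f l) <= robust_cost f.
Proof. exact: le_bigmax. Qed.

Lemma robust_cost_le (f : Sc I -> A I -> R) (M : R) :
  0 <= M -> (forall l, flow_cost (f l) <= M) -> robust_cost f <= M.
Proof. by move=> M_ge0 fM; apply: bigmax_le. Qed.

End RobustCost.

Lemma int_unit_interval (R : archiRealDomainType) (x : R) :
  x \is a Num.int -> 0 <= x <= 1 -> x = 0 \/ x = 1.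
Proof.
move=> /intrP[m ->]; rewrite ler0z lerz1 => /andP[m_ge0 m_le1].
have [->|->] : m = 0 \/ m = 1 by lia.
- by left.
- by right.
Qed.

(* Arcs of the instance; vertex true is the source s, false the sink t. *)
Definition fixed_arc : 'I_3 := @Ordinal 3 0 isT.   (* s -> t, cost 0, fixed *)
Definition direct_arc : 'I_3 := @Ordinal 3 1 isT.  (* s -> t, cost 1 *)
Definition back_arc : 'I_3 := @Ordinal 3 2 isT.    (* t -> s, cost 1 *)

Lemma sum_arcs (Z : nmodType) (F : 'I_3 -> Z) :
  \sum_(a < 3) F a = F fixed_arc + F direct_arc + F back_arc.
Proof.
rewrite !big_ord_recl big_ord0 addr0 addrA.
by congr (_ + _ + _); apply: f_equal; apply/val_inj.
Qed.

(* Scenario true is the demand scenario (b(s) = 1, b(t) = -1), scenario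
   false the zero scenario. *)
Definition gap_instance : instance :=
  @Instance bool (ordinal 3)
    (fun a => val a != 2%N) (fun a => val a == 2%N)
    (fun a => val a == 0%N) (fun _ => 1%N)
    (fun a => if val a == 0%N then 0%N else 1%N) bool
    (fun l v => if l then (if v then 1 else -1) else 0).

Lemma gap_instance_valid : valid gap_instance.
Proof.
split; first by rewrite card_bool.
by case; rewrite unlock /reducebig /index_enum /= !unlock.
Qed.

Section GapInstance.
Variable R : realType.

Lemma net_outflowE (h : A gap_instance -> R) (v : V gap_instance) :
  \sum_(a | Defs.tail a == v) h a - \sum_(a | Defs.head a == v) h a
  = if v then h fixed_arc + h direct_arc - h back_arc
    else h back_arc - h fixed_arc - h direct_arc.
Proof.
rewrite big_mkcond [X in _ - X]big_mkcond /= !sum_arcs /=.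
by case: v; rewrite /= ?add0r ?addr0 ?sub0r ?subr0 //; lra.
Qed.

Lemma flow_costE (h : A gap_instance -> R) :
  flow_cost h = h direct_arc + h back_arc.
Proof. by rewrite /flow_cost sum_arcs /= mul0r !mul1r add0r. Qed.

Lemma robust_flowP (f : Sc gap_instance -> A gap_instance -> R) :
  robust_flow f <->
  [/\ forall l a, 0 <= f l a <= 1,
      f true fixed_arc + f true direct_arc - f true back_arc = 1,
      f false fixed_arc + f false direct_arc - f false back_arc = 0
    & f true fixed_arc = f false fixed_arc].
Proof.
split.
  move=> [flow consistent]; split.
  - by move=> l a; have [bounds _] := flow l; exact: bounds.
  - by have [_ /(_ true)] := flow true; rewrite net_outflowE.
  - by have [_ /(_ true)] := flow false; rewrite net_outflowE.
  - exact: consistent.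
move=> [bounds demand zero fixed_eq]; split.
  move=> l; split; first exact: bounds.
  by move=> v; rewrite net_outflowE; case: l v demand zero => -[] /=; lra.
move=> a l l' /= /eqP a0.
have -> : a = fixed_arc by apply/val_inj.
by case: l; case: l'.
Qed.

Lemma robust_cost_lower_bound (h : Sc gap_instance -> A gap_instance -> R) :
  robust_flow h ->
  1 - h true fixed_arc <= robust_cost h /\ h true fixed_arc <= robust_cost h.
Proof.
move=> /robust_flowP[bounds demand zero fixed_eq].
have demand_cost := flow_cost_le_robust_cost h true.
have zero_cost := flow_cost_le_robust_cost h false.
rewrite !flow_costE in demand_cost zero_cost.
have /andP[? _] := bounds true direct_arc.
have /andP[? _] := bounds true back_arc.
have /andP[? _] := bounds false direct_arc.
split; lra.
Qed.

Lemma continuous_lower_bound (h : Sc gap_instance -> A gap_instance -> R) :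
  robust_flow h -> 2^-1 <= robust_cost h.
Proof. by move=> /robust_cost_lower_bound[]; lra. Qed.

Lemma integral_lower_bound (h : Sc gap_instance -> A gap_instance -> R) :
  robust_flow h -> integral_flow h -> 1 <= robust_cost h.
Proof.
move=> robust_h integral_h.
have [low_demand low_zero] := robust_cost_lower_bound robust_h.
have /robust_flowP[bounds _ _ _] := robust_h.
have [x0|x1] := int_unit_interval (integral_h true fixed_arc) (bounds _ _).
- by rewrite x0 subr0 in low_demand.
- by rewrite x1 in low_zero.
Qed.

Definition half_flow (l : Sc gap_instance) (a : A gap_instance) : R :=
  if a == fixed_arc then 2^-1
  else if a == (if l then direct_arc else back_arc) then 2^-1 else 0.

Definition unit_flow (l : Sc gap_instance) (a : A gap_instance) : R :=
  if l && (a == direct_arc) then 1 else 0.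

Lemma half_flow_robust : robust_flow half_flow.
Proof.
apply/robust_flowP; rewrite /half_flow /=; split=> //; try lra.
by move=> l a; case: ifP => _; [|case: ifP => _]; lra.
Qed.

Lemma half_flow_cost : robust_cost half_flow <= 2^-1.
Proof.
apply: robust_cost_le => [|l]; first lra.
by rewrite flow_costE /half_flow; case: l => /=; lra.
Qed.

Lemma unit_flow_robust : robust_flow unit_flow.
Proof.
apply/robust_flowP; rewrite /unit_flow /=; split=> //; try lra.
by move=> l a; case: ifP => _; lra.
Qed.

Lemma unit_flow_integral : integral_flow unit_flow.
Proof. by move=> l a; rewrite /unit_flow; case: ifP. Qed.

Lemma unit_flow_cost : robust_cost unit_flow <= 1.
Proof.
apply: robust_cost_le => [//|l].
by rewrite flow_costE /unit_flow; case: l => /=; lra.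
Qed.

End GapInstance.

Theorem mainTheorem1 (R : realType) :
  exists I : instance,
    valid I /\ #|Sc I| = 2%N /\ (forall a : A I, cap a = 1%N) /\
    exists f : Sc I -> A I -> R,
      robust_flow f /\
      (forall f' : Sc I -> A I -> R, robust_flow f' -> robust_cost f <= robust_cost f') /\
      exists g : Sc I -> A I -> R,
        robust_flow g /\ integral_flow g /\
        (forall g' : Sc I -> A I -> R, robust_flow g' -> integral_flow g' ->
           robust_cost g <= robust_cost g') /\
        robust_cost f < robust_cost g.
Proof.
exists gap_instance; split; first exact: gap_instance_valid.
split; first by rewrite card_bool.
split=> //.
exists (half_flow R); split; first exact: half_flow_robust.
split.
  move=> f' /continuous_lower_bound; exact: le_trans (half_flow_cost R).
exists (unit_flow R); split; first exact: unit_flow_robust.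
split; first exact: unit_flow_integral.
split.
  move=> g' robust_g' /(integral_lower_bound robust_g').
  exact: le_trans (unit_flow_cost R).
have unit_ge1 := integral_lower_bound (unit_flow_robust R) (unit_flow_integral R).
by apply: le_lt_trans (half_flow_cost R) _; apply: lt_le_trans unit_ge1; lra.
Qed.
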